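(* Let $n\geq 2$, let $G$ be a group, and let $\mathbb{F}_n$ be the free group on $e_1,\dots,e_n$. Let $h:\mathbb{F}_n\to G$ be a map satisfying $h(x^{-1})=h(x)^{-1}$ and $h(xy)=h(y)h(x)$ for all $x,y\in\mathbb{F}_n$. Then for every braid $\beta\in\mathcal{B}_n$, $$h\big(\beta\bullet(e_1,\dots,e_n)\big)=\beta^{-1}\bullet\big(h(e_1),\dots,h(e_n)\big),$$ where for $(f_1,\dots,f_n)\in\mathbb{F}_n^n$ we write $h(f_1,\dots,f_n)=(h(f_1),\dots,h(f_n))$.
   Context: The braid group $\mathcal{B}_n$ is the group with generators $\beta_1,\dots,\beta_{n-1}$ and relations $\beta_i\beta_j\beta_i=\beta_j\beta_i\beta_j$ if $|i-j|=1$, $\beta_i\beta_j=\beta_j\beta_i$ if $|i-j|>1$. It acts on $\mathbb{F}_n$ by automorphisms $a_\beta$ determined by $a_{\beta_i}(e_i)=e_{i+1}$, $a_{\beta_i}(e_{i+1})=e_{i+1}e_ie_{i+1}^{-1}$, $a_{\beta_i}(e_j)=e_j$ for $j\notin\{i,i+1\}$; and $\beta\bullet(e_1,\dots,e_n)=(a_\beta(e_1),\dots,a_\beta(e_n))$. The braid group also acts (on the left) on $G^n$, the action being determined on generators by $\beta_i\bullet(x_1,\dots,x_{i-1},x_i,x_{i+1},x_{i+2},\dots,x_n)=(x_1,\dots,x_{i-1},x_ix_{i+1}x_i^{-1},x_i,x_{i+2},\dots,x_n)$. *)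

From HB Require Import structures.
From mathcomp Require Import all_boot.

Set Implicit Arguments.
Unset Strict Implicit.
Unset Printing Implicit Defensive.

Local Open Scope group_scope.

(* The free group F_n on e_1,...,e_n (0-indexed here: generators 'I_n),    *)
(* as the set of freely reduced words.  A letter (i, b) stands for e_i if  *)
(* b = false and e_i^{-1} if b = true.                                     *)

Definition letter (n : nat) := ('I_n * bool)%type.

Definition cancels n (a b : letter n) : bool := (a.1 == b.1) && (a.2 != b.2).

Definition reduced n (w : seq (letter n)) : bool :=
  sorted (fun a b => ~~ cancels a b) w.

Definition red_cons n (x : letter n) (w : seq (letter n)) : seq (letter n) :=
  if w is y :: t then (if cancels x y then t else x :: w) else [:: x].

Definition red n (w : seq (letter n)) : seq (letter n) := foldr (@red_cons n) [::] w.

Lemma red_reduced n (w : seq (letter n)) : reduced (red w).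
Proof.
elim: w => [|x w IH] //=.
rewrite /red_cons; case E: (red w) => [|y t] //.
rewrite E in IH.
case: ifP => Hc.
- by move: IH; rewrite /reduced /=; clear E; case: t => //= z t /andP[].
- by rewrite /reduced /= Hc.
Qed.

Record fgroup (n : nat) := FG { fgword : seq (letter n); _ : reduced fgword }.

Definition fg_mk n (w : seq (letter n)) : fgroup n := @FG n (red w) (red_reduced w).

Definition fg_one n : fgroup n := fg_mk [::].
Definition fg_mul n (x y : fgroup n) : fgroup n := fg_mk (fgword x ++ fgword y).
Definition fg_inv n (x : fgroup n) : fgroup n :=
  fg_mk (rev (map (fun a : letter n => (a.1, ~~ a.2)) (fgword x))).

Definition fg_gen n (i : 'I_n) : fgroup n := fg_mk [:: (i, false)].

Definition fg_genN n (k : nat) : fgroup n :=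
  if @insub _ (fun j => j < n) ('I_n) k is Some o then fg_gen o else fg_one n.

Definition fg_ext n (f : 'I_n -> fgroup n) (x : fgroup n) : fgroup n :=
  foldr (fun a acc => fg_mul (if a.2 then fg_inv (f a.1) else f a.1) acc)
        (fg_one n) (fgword x).

(* Braids.  A braid in B_n is represented by a word in the generators      *)
(* beta_1,...,beta_{n-1} and their inverses: a letter (i, b) with          *)
(* i : 'I_(n.-1) stands for beta_{i+1} if b = false, beta_{i+1}^{-1} if    *)
(* b = true.  The word [:: l1; ...; lk] denotes the product l1 * ... * lk. *)

Definition braid_word (n : nat) := seq ('I_n.-1 * bool).

Definition braid_inv n (w : braid_word n) : braid_word n :=
  rev (map (fun l : 'I_n.-1 * bool => (l.1, ~~ l.2)) w).

Definition aut_gen_img n (l : 'I_n.-1 * bool) (j : 'I_n) : fgroup n :=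
  let i := nat_of_ord l.1 in
  let ei := fg_genN n i in
  let ei1 := fg_genN n i.+1 in
  if ~~ l.2 then
    (if nat_of_ord j == i then ei1
     else if nat_of_ord j == i.+1 then fg_mul ei1 (fg_mul ei (fg_inv ei1))
     else fg_gen j)
  else
    (if nat_of_ord j == i then fg_mul (fg_inv ei) (fg_mul ei1 ei)
     else if nat_of_ord j == i.+1 then ei
     else fg_gen j).

Definition braid_aut n (w : braid_word n) (x : fgroup n) : fgroup n :=
  foldr (fun l acc => fg_ext (aut_gen_img l) acc) x w.

(* beta • (e_1, ..., e_n) = (a_beta(e_1), ..., a_beta(e_n)) *)
Definition braid_act_F n (w : braid_word n) : 'I_n -> fgroup n :=
  fun j => braid_aut w (fg_gen j).

(* The left action of B_n on G^n (tuples as functions 'I_n -> G).          *)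

Definition tup_at (G : groupType) n (x : 'I_n -> G) (k : nat) : G :=
  if @insub _ (fun j => j < n) ('I_n) k is Some o then x o else 1.

Definition braid_gen_act (G : groupType) n (l : 'I_n.-1 * bool) (x : 'I_n -> G)
  : 'I_n -> G :=
  fun j =>
  let i := nat_of_ord l.1 in
  let xi := tup_at x i in
  let xi1 := tup_at x i.+1 in
  if ~~ l.2 then
    (if nat_of_ord j == i then xi * xi1 * xi^-1
     else if nat_of_ord j == i.+1 then xi
     else x j)
  else
    (if nat_of_ord j == i then xi1
     else if nat_of_ord j == i.+1 then xi1^-1 * xi * xi1
     else x j).

Definition braid_act_G (G : groupType) n (w : braid_word n) (x : 'I_n -> G)
  : 'I_n -> G :=
  foldr (fun l acc => braid_gen_act l acc) x w.

(* An anti-homomorphism h : F_n -> G is determined by the images of the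
   generators: h x is the reversed product of the letters of x.  Hence
   h o a_beta_i, again an anti-homomorphism, only depends on the tuple
   (h (a_beta_i e_j))_j, which is beta_i^-1 applied to (h e_j)_j.  Peeling
   off the first letter of beta and inducting, the order reversal of an
   anti-homomorphism turns the word of beta into that of beta^-1. *)
From HB Require Import structures.
From mathcomp Require Import all_boot.

Set Implicit Arguments.
Unset Strict Implicit.
Unset Printing Implicit Defensive.

Local Open Scope group_scope.

Section AntiHomomorphisms.

Variables (n : nat) (G : groupType).

Definition letter_eval (g : 'I_n -> G) (a : letter n) : G :=
  if a.2 then (g a.1)^-1 else g a.1.

Definition word_eval (g : 'I_n -> G) (w : seq (letter n)) : G :=
  foldr (fun a acc => acc * letter_eval g a) 1 w.

Definition antihom (h : fgroup n -> G) : Prop :=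
  (forall x, h (fg_inv x) = (h x)^-1) /\ (forall x y, h (fg_mul x y) = h y * h x).

Lemma word_eval_cat g s t : word_eval g (s ++ t) = word_eval g t * word_eval g s.
Proof. by elim: s => [|a s IH] /=; rewrite ?mulg1 // IH mulgA. Qed.

Lemma word_eval_red_cons g a w :
  word_eval g (red_cons a w) = word_eval g w * letter_eval g a.
Proof.
case: w => [|b t] //=; case: ifP => // /andP[/eqP eq_ab neq_ab].
rewrite -mulgA /letter_eval eq_ab.
by case: (a.2) (b.2) neq_ab => [] [] //= _; rewrite ?mulgV ?mulVg mulg1.
Qed.

Lemma word_eval_red g w : word_eval g (red w) = word_eval g w.
Proof. by elim: w => [|a w IH] //=; rewrite word_eval_red_cons IH. Qed.

Lemma word_eval_rev_flip g w :
  word_eval g (rev (map (fun a : letter n => (a.1, ~~ a.2)) w)) = (word_eval g w)^-1.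
Proof.
elim: w => [|a w IH] /=; first by rewrite invg1.
rewrite rev_cons -cats1 word_eval_cat IH /= mul1g invgM /letter_eval /=.
by case: (a.2); rewrite ?invgK.
Qed.

Lemma antihom_word_eval g : antihom (fun x => word_eval g (fgword x)).
Proof.
split=> [x | x y] /=; rewrite word_eval_red.
- exact: word_eval_rev_flip.
- exact: word_eval_cat.
Qed.

Variable h : fgroup n -> G.
Hypothesis h_anti : antihom h.

Lemma antihom1 : h (fg_one n) = 1.
Proof.
apply: (mulgI (h (fg_one n))); rewrite mulg1.
by rewrite -h_anti.2.
Qed.

Lemma antihom_fg_ext f x : h (fg_ext f x) = word_eval (fun j => h (f j)) (fgword x).
Proof.
rewrite /fg_ext; elim: (fgword x) => [|a w IH] /=; first exact: antihom1.
by rewrite h_anti.2 IH /letter_eval; case: (a.2); rewrite ?h_anti.1.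
Qed.

Lemma antihom_fg_ext_gen f k : h (fg_ext f (fg_gen k)) = h (f k).
Proof. by rewrite antihom_fg_ext /= mul1g. Qed.

Lemma antihom_comp_fg_ext f : antihom (fun x => h (fg_ext f x)).
Proof.
have [inv_eval mul_eval] := antihom_word_eval (fun j => h (f j)).
by split=> *; rewrite !antihom_fg_ext ?inv_eval ?mul_eval.
Qed.

Lemma antihom_genN k : h (fg_genN n k) = tup_at (fun j => h (fg_gen j)) k.
Proof. by rewrite /fg_genN /tup_at; case: insub => //; exact: antihom1. Qed.

Lemma antihom_aut_gen_img l k :
  h (aut_gen_img l k) = braid_gen_act (l.1, ~~ l.2) (fun j => h (fg_gen j)) k.
Proof.
rewrite /aut_gen_img /braid_gen_act /=.
by case: (l.2) => /=; do 2?case: ifP => _; rewrite ?h_anti.2 ?h_anti.1 ?antihom_genN ?mulgA.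
Qed.

End AntiHomomorphisms.

Section BraidActionOnTuples.

Variables (n : nat) (G : groupType).

Lemma eq_braid_gen_act l (x y : 'I_n -> G) :
  x =1 y -> braid_gen_act l x =1 braid_gen_act l y.
Proof.
move=> eq_xy j; have eq_tup k : tup_at x k = tup_at y k.
  by rewrite /tup_at; case: insub.
by rewrite /braid_gen_act !eq_tup eq_xy.
Qed.

Lemma eq_braid_act_G w (x y : 'I_n -> G) :
  x =1 y -> braid_act_G w x =1 braid_act_G w y.
Proof. by elim: w => [|l w IH] //= /IH; exact: eq_braid_gen_act. Qed.

Lemma braid_act_G_rcons w l (x : 'I_n -> G) :
  braid_act_G (rcons w l) x = braid_act_G w (braid_gen_act l x).
Proof. exact: foldr_rcons. Qed.

End BraidActionOnTuples.

Lemma braid_inv_cons n (l : 'I_n.-1 * bool) (w : braid_word n) :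
  braid_inv (l :: w) = rcons (braid_inv w) (l.1, ~~ l.2).
Proof. by rewrite /braid_inv /= rev_cons. Qed.

Lemma antihom_braid_aut_gen n (G : groupType) (w : braid_word n) (h : fgroup n -> G) :
  antihom h -> forall j : 'I_n,
  h (braid_aut w (fg_gen j)) = braid_act_G (braid_inv w) (fun k => h (fg_gen k)) j.
Proof.
elim: w h => [|l w IH] h h_anti j //=.
have h'_anti := antihom_comp_fg_ext h_anti (aut_gen_img l).
move: (IH _ h'_anti j) => /= ->.
rewrite braid_inv_cons braid_act_G_rcons.
apply: eq_braid_act_G => k.
by rewrite antihom_fg_ext_gen // antihom_aut_gen_img.
Qed.

Theorem lemma6p4 (n : nat) (Hn : 2 <= n) (G : groupType) (h : fgroup n -> G)
  (h_inv : forall x : fgroup n, h (fg_inv x) = (h x)^-1)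
  (h_mul : forall x y : fgroup n, h (fg_mul x y) = h y * h x)
  (beta : braid_word n) :
  forall j : 'I_n,
    h (braid_act_F beta j) = braid_act_G (braid_inv beta) (fun k => h (fg_gen k)) j.
Proof. exact: antihom_braid_aut_gen (conj h_inv h_mul). Qed.
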